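(* Let $M_1$ and $M_2$ be matroids on a common ground set $E$ with the same rank $r$, and assume $r_{M_1}(X)+r_{M_2}(E\setminus X)>r$ for every $\emptyset\ne X\subsetneq E$. Let $B$ be a common basis of $M_1,M_2$ and $\psi\colon E\to\Gamma$ a labeling to an abelian group $\Gamma$. Then every directed cycle $C$ of $D_{M_1,M_2}(B)$ satisfies $\psi'(C)=0$ if and only if there exist labelings $\psi_1,\psi_2\colon E\to\Gamma$ with $\psi=\psi_1+\psi_2$ such that, for $i=1,2$, $\psi_i$ is constant on each connected component of $M_i$.
   Context: $r_M$ denotes the rank function. For a common basis $B$, the digraph $D_{M_1,M_2}(B)$ has vertex set $E$ and arcs: for each $x\in B$, $y\in E\setminus B$ with $B-x+y$ a basis of $M_1$, an arc $xy$ with label $\psi'(xy):=\psi(y)$; for each $x\in B$, $y\in E\setminus B$ with $B-x+y$ a basis of $M_2$, an arc $yx$ with label $\psi'(yx):=-\psi(x)$. The label of a directed cycle is the sum of the labels of its arcs. Connected components of a matroid are the classes of the relation ''equal or in a common circuit''. *)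

From HB Require Import structures.
From mathcomp Require Import all_boot all_order all_algebra.
Set Implicit Arguments. Unset Strict Implicit. Unset Printing Implicit Defensive.
Import GRing.Theory.

(* A matroid on the finite ground set E (the whole finType), given by its
   independent sets (standard independence axioms). *)
Record matroid (E : finType) := Matroid {
  indep : {set E} -> bool;
  indep0 : indep set0;
  indep_sub : forall X Y : {set E}, Y \subset X -> indep X -> indep Y;
  indep_exch : forall X Y : {set E}, indep X -> indep Y -> #|X| < #|Y| ->
      exists2 e, e \in Y :\: X & indep (e |: X)
}.

Section MatroidDefs.
Variable E : finType.
Implicit Types (M : matroid E) (X B C : {set E}).

Definition mrank M X : nat := \max_(Y : {set E} | indep M Y && (Y \subset X)) #|Y|.

Definition is_basis M B : bool := maxset (indep M) B.

Definition is_circuit M C : bool := minset (fun D : {set E} => ~~ indep M D) C.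

(* relation "equal or in a common circuit"; its classes are the connected
   components of M *)
Definition comp_rel M (x y : E) : Prop :=
  x = y \/ exists C, is_circuit M C /\ x \in C /\ y \in C.

Definition const_on_components (G : Type) M (f : E -> G) : Prop :=
  forall x y, comp_rel M x y -> f x = f y.

Definition exch_arc (M1 M2 : matroid E) B (u v : E) : bool :=
  [&& u \in B, v \notin B & is_basis M1 (v |: (B :\ u))]
  ||
  [&& v \in B, u \notin B & is_basis M2 (u |: (B :\ v))].

Definition arc_label (G : zmodType) B (psi : E -> G) (u v : E) : G :=
  if u \in B then psi v else (- psi v)%R.

Definition is_dicycle (M1 M2 : matroid E) B (s : seq E) : bool :=
  [&& s != [::], uniq s & cycle (exch_arc M1 M2 B) s].

Definition cycle_label (G : zmodType) B (psi : E -> G) (s : seq E) : G :=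
  (\sum_(p <- zip s (rot 1 s)) arc_label B psi p.1 p.2)%R.

End MatroidDefs.

From mathcomp Require Import all_boot all_order all_algebra.
From mathcomp Require Import zify.
Import GRing.Theory.
Set Implicit Arguments. Unset Strict Implicit. Unset Printing Implicit Defensive.

(* Both directions go through potentials on the exchange digraph D = D(B).
   If psi = psi1 + psi2 with psi_i constant on the components of M_i, then
   g := -psi1 on B and g := psi2 off B satisfies g v - g u = psi'(uv) on every arc,
   since the ends of an M_i-exchange arc lie in a common circuit of M_i; so
   cycle labels telescope to 0.  Conversely, the rank condition makes D
   strongly connected (an arc-closed proper set X would have its trace in B
   spanning X in M_1 and its complement's trace spanning ~X in M_2, so
   r_{M1}(X) + r_{M2}(~X) <= r); if all cycles have label 0 then so do all
   closed walks, and path labels from a fixed root define a potential p.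
   Taking psi1 := -p on B and psi - p off B, each psi_i is constant across
   the exchange pairs of B in M_i, and a set whose trace in B spans it and
   its complement separates no circuit, so psi_i is constant on components. *)

Section MatroidFacts.
Variables (E : finType) (M : matroid E).
Implicit Types (B I J K S Y C : {set E}).

Lemma basis_indep B : is_basis M B -> indep M B.
Proof. by move/maxsetp. Qed.

Lemma basis_setU1_dep B y : is_basis M B -> y \notin B -> ~~ indep M (y |: B).
Proof.
move=> hB yB; apply/negP=> hi.
have := maxsetsup hB hi (subsetUr _ _) => /setP /(_ y).
by rewrite !inE eqxx /= (negbTE yB).
Qed.

Lemma indep_card_le_basis B Y : is_basis M B -> indep M Y -> #|Y| <= #|B|.
Proof.
move=> hB hY; rewrite leqNgt; apply/negP=> lt.
have [e /setDP [_ eB] hi] := indep_exch (basis_indep hB) hY lt.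
by move: (basis_setU1_dep hB eB); rewrite hi.
Qed.

Lemma basis_of_card B S : is_basis M B -> indep M S -> #|S| = #|B| -> is_basis M S.
Proof.
move=> hB hS cS; apply/maxsetP; split=> // T hT sST.
apply/eqP; rewrite eq_sym eqEcard sST /= cS.
exact: indep_card_le_basis hB hT.
Qed.

Lemma mrank_setT B : is_basis M B -> mrank M [set: E] = #|B|.
Proof.
move=> hB; apply/eqP; rewrite eqn_leq; apply/andP; split.
  by apply/bigmax_leqP => Y /andP [hY _]; exact: indep_card_le_basis hB hY.
apply: (@leq_bigmax_cond _ (fun Y => indep M Y && (Y \subset [set: E]))
                         (fun Y => #|Y|) B).
by rewrite (basis_indep hB) subsetT.
Qed.

Lemma indep_augment I J : indep M I -> indep M J -> #|I| <= #|J| ->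
  exists S, [/\ indep M S, I \subset S, S \subset I :|: J & #|S| = #|J|].
Proof.
move=> hI hJ; move: {2}(#|J| - #|I|) (erefl (#|J| - #|I|)) => n.
elim: n I hI => [|n IH] I hI hn hle.
  exists I; split=> //; first exact: subsetUl.
  by apply/eqP; rewrite eqn_leq hle /= -subn_eq0 hn.
have [e /setDP [eJ eI] hi] : exists2 e, e \in J :\: I & indep M (e |: I).
  by apply: indep_exch hI hJ _; lia.
have ce : #|e |: I| = #|I|.+1 by rewrite cardsU1 eI.
have [||S [hS IS SIJ cS]] := IH (e |: I) hi; rewrite ?ce; try lia.
exists S; split=> //; first exact: subset_trans (subsetUr _ _) IS.
apply: (subset_trans SIJ); apply/subsetP=> z; rewrite !inE.
by case/orP=> [/orP[/eqP->|->]|->]; rewrite ?eJ ?orbT.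
Qed.

(* Augment y |: (B :&: K) from B to a basis S of y |: B; it omits exactly
   one x of B, and x cannot lie in K. *)
Lemma basis_exchange_outside B K y :
  is_basis M B -> y \notin B -> indep M (y |: (B :&: K)) ->
  exists2 x, x \in B :\: K & is_basis M (y |: (B :\ x)).
Proof.
move=> hB yB hI.
have [S [hS IS SIB cS]] :=
  indep_augment hI (basis_indep hB) (indep_card_le_basis hB hI).
have SyB : S \subset y |: B.
  apply: (subset_trans SIB); apply/subsetP=> z; rewrite !inE.
  by case/orP=> [/orP[->|/andP[->]]|->]; rewrite ?orbT.
have yS : y \in S by apply: (subsetP IS); rewrite !inE eqxx.
have [x Dx] : exists x, (y |: B) :\: S = [set x].
  apply/cards1P; rewrite cardsD (setIidPr SyB) cS cardsU1 yB add1n subSnn.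
  by [].
have /setDP [xyB xS] : x \in (y |: B) :\: S by rewrite Dx set11.
have xB : x \in B.
  by move: xyB; rewrite !inE => /orP[/eqP xy|//]; move: xS; rewrite xy yS.
have xK : x \notin K.
  by apply: contra xS => xK; apply: (subsetP IS); rewrite !inE xB xK orbT.
exists x; first by rewrite !inE xB xK.
suff -> : y |: (B :\ x) = S by exact: basis_of_card hB hS cS.
apply/setP=> z; apply/idP/idP=> [|zS].
  rewrite !inE => hz; apply/negPn/negP=> zS.
  have : z \in (y |: B) :\: S.
    by rewrite !inE zS /=; case/orP: hz=> [->//|/andP[_ ->]]; exact: orbT.
  rewrite Dx inE => /eqP zx; move: hz; rewrite zx eqxx /= orbF => /eqP xy.
  by move: xS; rewrite xy yS.
have := subsetP SyB z zS; rewrite !inE => /orP[->//|->].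
by rewrite andbT orbC; apply/orP; left; apply: contraTneq zS => ->.
Qed.

Definition trace_spans B K :=
  forall y, y \in K -> y \notin B -> ~~ indep M (y |: (B :&: K)).

Lemma indep_card_le_trace B K Y : is_basis M B -> trace_spans B K ->
  indep M Y -> Y \subset K -> #|Y| <= #|B :&: K|.
Proof.
move=> hB cK hY YK; rewrite leqNgt; apply/negP=> lt.
have hBK : indep M (B :&: K) by apply: indep_sub (basis_indep hB); exact: subsetIl.
have [e /setDP [eY eBK] hi] := indep_exch hBK hY lt.
have eK : e \in K := subsetP YK e eY.
have eB : e \notin B by apply: contra eBK => eB; rewrite inE eB eK.
by move: (cK e eK eB); rewrite hi.
Qed.

Lemma mrank_le_trace B K : is_basis M B -> trace_spans B K ->
  mrank M K <= #|B :&: K|.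
Proof.
move=> hB cK; apply/bigmax_leqP => Y /andP [hY YK].
exact: indep_card_le_trace hB cK hY YK.
Qed.

Lemma indep_setU_trace_spans B K I I' :
  is_basis M B -> trace_spans B K -> trace_spans B (~: K) ->
  indep M I -> indep M I' -> I \subset K -> I' \subset ~: K ->
  indep M (I :|: I').
Proof.
move=> hB cK cK' hI hI' IK IK'.
have [S [hS IS _ cS]] :=
  indep_augment hI (basis_indep hB) (indep_card_le_basis hB hI).
have le_I'S : #|I'| <= #|S| by rewrite cS; exact: indep_card_le_basis hB hI'.
have [T [hT IT TIS cT]] := indep_augment hI' hS le_I'S.
(* Both parts of T are bounded by the traces of B, and #|T| = #|B|, so
   T :&: K cannot lose anything from S :&: K, which contains I. *)
have TKS : T :&: K \subset S :&: K.
  apply/subsetP=> z; rewrite !inE => /andP [zT zK]; rewrite zK andbT.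
  have := subsetP TIS z zT; rewrite inE => /orP[zI'|//].
  by have := subsetP IK' z zI'; rewrite inE zK.
have b1 : #|S :&: K| <= #|B :&: K|.
  by apply: (indep_card_le_trace hB cK (indep_sub (subsetIl _ _) hS)); exact: subsetIr.
have b2 : #|T :&: ~: K| <= #|B :&: ~: K|.
  by apply: (indep_card_le_trace hB cK' (indep_sub (subsetIl _ _) hT)); exact: subsetIr.
have e1 := cardsID K T; have e2 := cardsID K B; rewrite !setDE in e1 e2.
have eqTS : T :&: K = S :&: K by apply/eqP; rewrite eqEcard TKS /=; lia.
apply: indep_sub hT; apply/subsetP=> z; rewrite inE => /orP[zI|]; last exact: subsetP.
have : z \in S :&: K by rewrite inE (subsetP IS) // (subsetP IK).
by rewrite -eqTS inE => /andP [].
Qed.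

Lemma circuit_sub_trace_spans B K C x :
  is_basis M B -> trace_spans B K -> trace_spans B (~: K) ->
  is_circuit M C -> x \in C -> x \in K -> C \subset K.
Proof.
move=> hB cK cK' hC xC xK; apply/subsetP=> z zC; apply/negPn/negP=> zK.
have proper_indep (D : {set E}) : D \subset C -> D != C -> indep M D.
  move=> DC; apply: contraR => dep.
  by rewrite (minsetinf hC dep DC).
have h1 : indep M (C :&: K).
  apply: proper_indep; first exact: subsetIl.
  by apply/negP=> /eqP eq; move: zC zK; rewrite -eq inE => /andP [_ ->].
have h2 : indep M (C :&: ~: K).
  apply: proper_indep; first exact: subsetIl.
  by apply/negP=> /eqP eq; move: xC; rewrite -eq !inE xK andbF.
have := indep_setU_trace_spans hB cK cK' h1 h2 (subsetIr _ _) (subsetIr _ _).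
by rewrite -setIUr setUCr setIT; apply/negP; exact: minsetp hC.
Qed.

Lemma exchange_comp_rel B a b :
  is_basis M B -> a \in B -> b \notin B -> is_basis M (b |: (B :\ a)) ->
  comp_rel M a b.
Proof.
move=> hB aB bB hb; right.
have [C hC CbB] := @minset_exists _ (fun D => ~~ indep M D) _ (basis_setU1_dep hB bB).
exists C; split=> //; have /= dep := minsetp hC; split.
  apply/negPn/negP=> aC; move: dep; rewrite (indep_sub _ (basis_indep hb)) //.
  apply/subsetP=> z zC; have := subsetP CbB z zC; rewrite !inE => /orP[->//|->].
  by rewrite andbT orbC; apply/orP; left; apply: contraNneq aC => <-.
apply/negPn/negP=> bC; move: dep; rewrite (indep_sub _ (basis_indep hB)) //.
apply/subsetP=> z zC; have := subsetP CbB z zC; rewrite !inE => /orP[/eqP zb|//].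
by move: bC; rewrite -zb zC.
Qed.

(* Constancy on components only needs to be checked on exchange pairs of a
   single basis: each level set of f then has a spanning trace in B. *)
Lemma const_on_components_exchange B (T : eqType) (f : E -> T) :
  is_basis M B ->
  (forall a b, a \in B -> b \notin B -> is_basis M (b |: (B :\ a)) -> f a = f b) ->
  const_on_components M f.
Proof.
move=> hB hf x y [->//|[C [hC [xC yC]]]].
pose K := [set z | f z == f x].
have cK : trace_spans B K.
  move=> y0 y0K y0B; apply/negP=> hi.
  have [a /setDP [aB aK] ha] := basis_exchange_outside hB y0B hi.
  by move: aK y0K; rewrite !inE (hf a y0 aB y0B ha) => /negP.
have cK' : trace_spans B (~: K).
  move=> y0 y0K y0B; apply/negP=> hi.
  have [a /setDP [aB aK] ha] := basis_exchange_outside hB y0B hi.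
  by move: aK y0K; rewrite !inE negbK (hf a y0 aB y0B ha) => ->.
have := subsetP (circuit_sub_trace_spans hB cK cK' hC xC _) y yC.
by rewrite !inE eqxx => /(_ isT) /eqP.
Qed.

End MatroidFacts.

Local Open Scope ring_scope.

Section WalkLabels.
Variables (T : eqType) (G : zmodType) (lab : T -> T -> G).

Fixpoint walk_label (x : T) (t : seq T) : G :=
  if t is y :: t' then lab x y + walk_label y t' else 0.

Lemma walk_label_cat x s1 s2 :
  walk_label x (s1 ++ s2) = walk_label x s1 + walk_label (last x s1) s2.
Proof. by elim: s1 x => [|y s IH] x /=; rewrite ?add0r // IH addrA. Qed.

Lemma walk_label_potential (e : rel T) (g : T -> G) :
  (forall u v, e u v -> lab u v = g v - g u) ->
  forall x t, path e x t -> walk_label x t = g (last x t) - g x.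
Proof.
move=> hg x t; elim: t x => [|y t IH] x /=; first by rewrite subrr.
by case/andP=> exy pt; rewrite IH // hg // addrC addrA subrK.
Qed.

Lemma not_uniq_split (s : seq T) :
  ~~ uniq s -> exists s1 y s2 s3, s = s1 ++ y :: s2 ++ y :: s3.
Proof.
elim: s => [|a s IH] //=; rewrite negb_and negbK => /orP[as_|/IH].
  by case/splitPr: as_ => p1 p2; exists [::], a, p1, p2.
by case=> s1 [y [s2 [s3 ->]]]; exists (a :: s1), y, s2, s3.
Qed.

(* A closed walk that repeats a vertex splits into two shorter closed
   walks, so by strong induction on the length it is a sum of cycles. *)
Lemma closed_walk_label0 (e : rel T) :
  (forall x s, uniq (x :: s) -> path e x (rcons s x) -> walk_label x (rcons s x) = 0) ->
  forall x t, path e x t -> last x t = x -> walk_label x t = 0.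
Proof.
move=> hcyc x t; move: {2}(size t) (leqnn (size t)) => n.
elim: n x t => [|n IH] x t; first by rewrite leqn0 => /nilP ->.
case/lastP: t => [//|s z] hs pt; rewrite last_rcons => zx; subst z.
have [u|nu] := boolP (uniq (rcons s x)).
  by apply: hcyc pt; rewrite /= -rcons_uniq.
have [s1 [y [s2 [s3 def]]]] := not_uniq_split nu.
have def' : rcons s x = rcons s1 y ++ (rcons s2 y ++ s3) by rewrite def !cat_rcons.
have lt : last x (rcons s1 y ++ (rcons s2 y ++ s3)) = x by rewrite -def' last_rcons.
rewrite def' in pt hs *; rewrite !size_cat !size_rcons in hs.
move: pt; rewrite !cat_path !last_rcons => /and3P [p1 p2 p3].
rewrite !walk_label_cat !last_rcons (IH y (rcons s2 y)) ?last_rcons ?size_rcons //;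
  last lia.
rewrite add0r; have := IH x (rcons s1 y ++ s3); rewrite walk_label_cat last_rcons.
apply; first by rewrite size_cat size_rcons; lia.
  by rewrite cat_path p1 last_rcons.
by move: lt; rewrite !last_cat !last_rcons.
Qed.

End WalkLabels.

(* p u is the label of a chosen walk from a root to u; any two such walks
   differ by closed walks. *)
Lemma strongly_connected_potential (T : finType) (G : zmodType)
    (e : rel T) (lab : T -> T -> G) :
  (forall u v, connect e u v) ->
  (forall x t, path e x t -> last x t = x -> walk_label lab x t = 0) ->
  exists p : T -> G, forall u v, e u v -> p v = p u + lab u v.
Proof.
move=> conn hclosed.
have [v0 _|empty] := pickP (fun _ : T => true); last first.
  by exists (fun _ => 0) => u; have := empty u.
have ex u : exists t, path e v0 t && (last v0 t == u).
  by have /connectP [t pt ->] := conn v0 u; exists t; rewrite pt eqxx.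
exists (fun u => walk_label lab v0 (xchoose (ex u))) => u v huv.
have /andP [pu /eqP lu] := xchooseP (ex u).
have /andP [pv /eqP lv] := xchooseP (ex v).
have /connectP [q pq lq] := conn v v0.
have z1 := hclosed v0 (xchoose (ex u) ++ v :: q).
have z2 := hclosed v0 (xchoose (ex v) ++ q).
rewrite !walk_label_cat !cat_path !last_cat lu lv /= huv pq pu pv -lq in z1 z2.
apply: (@addIr _ (walk_label lab v q)).
by rewrite -addrA z1 ?z2.
Qed.

Section ExchangeDigraph.
Variables (E : finType) (M1 M2 : matroid E) (B : {set E}).
Hypotheses (hB1 : is_basis M1 B) (hB2 : is_basis M2 B).

Local Notation D := (exch_arc M1 M2 B).

Lemma cycle_label_walk (G : zmodType) (psi : E -> G) x s :
  cycle_label B psi (x :: s) = walk_label (arc_label B psi) x (rcons s x).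
Proof.
rewrite /cycle_label rot1_cons; elim: s {-2 4}x => [|y s IH] a /=.
  by rewrite big_cons big_nil.
by rewrite big_cons IH.
Qed.

Lemma exch_arc_strongly_connected (r : nat) :
  mrank M1 [set: E] = r ->
  (forall X : {set E}, X != set0 -> X != [set: E] ->
     (r < mrank M1 X + mrank M2 (~: X))%N) ->
  forall u v, connect D u v.
Proof.
move=> hr1 hX u v; pose S := [set z | connect D u z].
have uS : u \in S by rewrite inE connect0.
have [|vS] := boolP (v \in S); first by rewrite inE.
have n0 : ~: S != set0 by apply/set0Pn; exists v; rewrite inE.
have nT : ~: S != [set: E].
  by apply/negP=> /eqP /setP /(_ u); rewrite in_setC in_setT uS.
have := hX _ n0 nT; rewrite setCK.
have c1 : trace_spans M1 B (~: S).
  move=> y yS yB; apply/negP=> hi.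
  have [a /setDP [aB aS] ha] := basis_exchange_outside hB1 yB hi.
  move: aS yS; rewrite !inE negbK => aS /negP; apply.
  by apply: connect_trans aS (connect1 _); rewrite /exch_arc aB yB ha.
have c2 : trace_spans M2 B S.
  move=> y yS yB; apply/negP=> hi.
  have [a /setDP [aB aS] ha] := basis_exchange_outside hB2 yB hi.
  move: aS yS; rewrite !inE => /negP aS yS; apply: aS.
  by apply: connect_trans yS (connect1 _); rewrite /exch_arc aB yB ha orbT.
have l1 := mrank_le_trace hB1 c1; have l2 := mrank_le_trace hB2 c2.
have e := cardsID S B; rewrite setDE in e.
rewrite -hr1 (mrank_setT hB1); lia.
Qed.

Definition decomposition_potential (G : zmodType) (psi1 psi2 : E -> G) (v : E) :=
  if v \in B then - psi1 v else psi2 v.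

Lemma decomposition_arc_potential (G : zmodType) (psi psi1 psi2 : E -> G) :
  (forall e, psi e = psi1 e + psi2 e) ->
  const_on_components M1 psi1 -> const_on_components M2 psi2 ->
  forall u v, D u v -> arc_label B psi u v =
    decomposition_potential psi1 psi2 v - decomposition_potential psi1 psi2 u.
Proof.
move=> hs c1 c2 u v; rewrite /decomposition_potential /exch_arc /arc_label.
case/orP=> /and3P [h1 h2 h3].
  rewrite h1 (negbTE h2) hs (c1 _ _ (exchange_comp_rel hB1 h1 h2 h3)).
  by rewrite opprK addrC.
rewrite h1 (negbTE h2) hs (c2 _ _ (exchange_comp_rel hB2 h1 h2 h3)).
by rewrite opprD addrC.
Qed.

Lemma arc_potential_decomposition (G : zmodType) (psi p : E -> G) :
  (forall u v, D u v -> p v = p u + arc_label B psi u v) ->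
  exists psi1 psi2 : E -> G, (forall e, psi e = psi1 e + psi2 e) /\
     const_on_components M1 psi1 /\ const_on_components M2 psi2.
Proof.
(* Inverse to decomposition_potential: psi1 := -p on B and psi - p off B. *)
move=> pot; pose psi1 v := if v \in B then - p v else psi v - p v.
exists psi1, (fun v => psi v - psi1 v); split; first by move=> v; rewrite addrC subrK.
split.
  apply: (const_on_components_exchange hB1) => a b aB bB hb.
  have := pot a b; rewrite /exch_arc aB bB hb /= => /(_ isT).
  rewrite /arc_label aB /psi1 aB (negbTE bB) => ->.
  by rewrite (addrC (p a)) opprD addrA subrr add0r.
apply: (const_on_components_exchange hB2) => a b aB bB hb.
have := pot b a; rewrite /exch_arc aB bB hb orbT => /(_ isT).
rewrite /arc_label (negbTE bB) /psi1 aB (negbTE bB) => ->.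
by rewrite opprK opprB [in LHS]addrC [in RHS]addrC !subrK.
Qed.

End ExchangeDigraph.

Theorem theorem3p13 (E : finType) (M1 M2 : matroid E) (r : nat)
  (hr1 : mrank M1 [set: E] = r) (hr2 : mrank M2 [set: E] = r)
  (hX : forall X : {set E}, X != set0 -> X != [set: E] ->
          (r < mrank M1 X + mrank M2 (~: X))%N)
  (B : {set E}) (hB1 : is_basis M1 B) (hB2 : is_basis M2 B)
  (G : zmodType) (psi : E -> G) :
  (forall s : seq E, is_dicycle M1 M2 B s -> cycle_label B psi s = 0%R) <->
  (exists psi1 psi2 : E -> G, (forall e, psi e = (psi1 e + psi2 e)%R) /\
     const_on_components M1 psi1 /\ const_on_components M2 psi2).
Proof.
split=> [hcyc|[psi1 [psi2 [hs [c1 c2]]]]].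
  have closed0 := closed_walk_label0 (e := exch_arc M1 M2 B) (lab := arc_label B psi).
  have [|p pot] := strongly_connected_potential
    (exch_arc_strongly_connected hB1 hB2 hr1 hX) (closed0 _).
    move=> x s us ps; rewrite -cycle_label_walk; apply: hcyc.
    by rewrite /is_dicycle us.
  exact: (arc_potential_decomposition hB1 hB2 (psi := psi) pot).
case=> [//|x s] /and3P [_ _ cyc]; rewrite cycle_label_walk.
rewrite (walk_label_potential (decomposition_arc_potential hB1 hB2 hs c1 c2) cyc).
by rewrite last_rcons subrr.
Qed.
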